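(* Let $K=K(p,q)$ be a 2-bridge knot, with $\sigma$, $A_{p,q},B_{p,q},D_{p,q}$ as in the context. For any $r\in\mathbb{Q}$, the fundamental group $\pi_1(S^3_r(K))$ admits a non-trivial $SL(2,\mathbb{R})$ representation if either the system $$A_{p,q}(t,u)=(t-t^{-1})B_{p,q}(t,u),\qquad t^{r-2\sigma}\big((t-t^{-1})^2-u\big)\big(B_{p,q}(t,u)\big)^2=1$$ has a solution $(t,u)\in\mathbb{R}^2$ with $t\notin\{-1,0,1\}$, or a solution with $t=e^{i\theta}$, $t\neq\pm1$, and $u\in(-\infty,-4\sin^2\theta)\cup(0,\infty)$; or if $r$, written in lowest terms, has odd numerator and odd denominator and the system $$A_{p,q}(-1,u)=0,\qquad -(r-2\sigma)\,u\,B_{p,q}(-1,u)=2D_{p,q}(-1,u)$$ has a solution $u\in\mathbb{R}$.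
   Context: $K(p,q)$ denotes the 2-bridge knot with $p,q$ odd integers, $q\in(-p,p)$. For $1\le i\le p-1$ let $e_i=(-1)^{\lfloor iq/p\rfloor}$ and $\sigma=\sum_{i=1}^{p-1}e_i$. For $t\in\mathbb{C}\setminus\{0\}$, $u\in\mathbb{C}$ let $C=\begin{pmatrix}t&1\\0&t^{-1}\end{pmatrix}$, $D=\begin{pmatrix}t&0\\-u&t^{-1}\end{pmatrix}$, and $W=C^{e_1}D^{e_2}\cdots C^{e_{p-2}}D^{e_{p-1}}=\begin{pmatrix}a&b\\c&d\end{pmatrix}$; the entries $a,b,d$ are Laurent polynomials in $\mathbb{Z}[t,t^{-1},u]$ denoted $A_{p,q}(t,u)$, $B_{p,q}(t,u)$, $D_{p,q}(t,u)$. $S^3_r(K)$ denotes Dehn surgery on $K$ with slope $r$. *)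

From HB Require Import structures.
From mathcomp Require Import all_boot all_order all_algebra.
From mathcomp Require Import all_classical all_reals all_analysis.
From mathcomp Require Import complex.
Set Implicit Arguments. Unset Strict Implicit. Unset Printing Implicit Defensive.
Import Order.TTheory GRing.Theory Num.Theory.
Local Open Scope ring_scope.

(** e_i = (-1)^{floor(i q / p)}, encoded as a boolean: [true] means e_i = -1.
    [(i q %/ p)%Z] is floor division (intdiv, positive divisor). *)
Definition esign (p : nat) (q : int) (i : nat) : bool :=
  odd `|((i%:Z * q) %/ p%:Z)%Z|%N.

Definition sgnb (b : bool) : int := if b then -1 else 1.

Definition sigma (p : nat) (q : int) : int :=
  \sum_(1 <= i < p) sgnb (esign p q i).

Definition mpowb (F : comUnitRingType) (M : 'M[F]_2) (e : bool) : 'M[F]_2 :=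
  if e then invmx M else M.

Definition wordW (F : comUnitRingType) (p : nat) (q : int) (X Y : 'M[F]_2)
  : 'M[F]_2 :=
  \prod_(1 <= i < p) mpowb (if odd i then X else Y) (esign p q i).

Definition wordWrev (F : comUnitRingType) (p : nat) (q : int) (X Y : 'M[F]_2)
  : 'M[F]_2 :=
  \prod_(1 <= i < p) mpowb (if odd (p - i) then X else Y) (esign p q (p - i)).

Definition mx2 (F : Type) (a b c d : F) : 'M[F]_2 :=
  \matrix_(i < 2, j < 2)
     if i == 0 :> nat then (if j == 0 :> nat then a else b)
     else (if j == 0 :> nat then c else d).

Definition Cmx (F : comUnitRingType) (t : F) : 'M[F]_2 := mx2 t 1 0 t^-1.
Definition Dmx (F : comUnitRingType) (t u : F) : 'M[F]_2 := mx2 t 0 (- u) t^-1.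
Definition Wmx (F : comUnitRingType) (p : nat) (q : int) (t u : F) : 'M[F]_2 :=
  wordW p q (Cmx t) (Dmx t u).

Definition Apq (F : comUnitRingType) p q (t u : F) : F := Wmx p q t u 0 0.
Definition Bpq (F : comUnitRingType) p q (t u : F) : F := Wmx p q t u 0 1.
Definition Dpq (F : comUnitRingType) p q (t u : F) : F := Wmx p q t u 1 1.

(** * The fundamental group of S^3_r(K(p,q)) via its standard presentation
    pi_1(S^3_r(K)) = < a, b | w a = b w,  a^m lambda^n = 1 >,
    where w = a^{e_1} b^{e_2} ... b^{e_{p-1}}, the meridian is a, the
    longitude is lambda = w* w a^{-2 sigma}, and r = m/n in lowest terms.
    A homomorphism pi_1(S^3_r(K)) -> SL(2,R) is the same as a pair of
    matrices (images of the generators a, b) in SL(2,R) satisfying the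
    relators; it is non-trivial iff it does not send both generators to 1. *)
Definition longitude (F : comUnitRingType) p q (a b : 'M[F]_2) : 'M[F]_2 :=
  wordWrev p q a b * wordW p q a b * a ^ (- (2 * sigma p q)).

Definition nontrivial_SL2_rep_surgery (R : realType) (p : nat) (q : int)
  (r : rat) : Prop :=
  exists a b : 'M[R]_2,
    [/\ \det a = 1, \det b = 1,
        wordW p q a b * a = b * wordW p q a b,
        a ^ numq r * longitude p q a b ^ denq r = 1
      & ~ (a = 1 /\ b = 1)].

(** Hypothesis (i): a real solution (t,u), t not in {-1,0,1}, of
      A(t,u) = (t - t^-1) B(t,u),  t^{r-2 sigma}((t-t^-1)^2 - u) B(t,u)^2 = 1.
    The (multivalued, for r = m/n) power t^{r-2 sigma} is read as
    t^{-2 sigma} z for a value z of t^{m/n}, i.e. z^n = t^m. *)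
Definition real_solution (R : realType) p q (r : rat) : Prop :=
  exists t u : R,
    [/\ t != -1, t != 0, t != 1,
        Apq p q t u = (t - t^-1) * Bpq p q t u
      & exists z : R, z ^ denq r = t ^ numq r /\
          z * t ^ (- (2 * sigma p q)) * ((t - t^-1) ^+ 2 - u)
            * (Bpq p q t u) ^+ 2 = 1].

Definition unit_circle_solution (R : realType) p q (r : rat) : Prop :=
  exists (theta u : R) (t : R[i]),
    [/\ t = Complex (cos theta) (sin theta), (t != 1) && (t != -1),
        (u < - (4 * (sin theta) ^+ 2)) || (0 < u),
        Apq p q t (real_complex R u) = (t - t^-1) * Bpq p q t (real_complex R u)
      & exists z : R[i], z ^ denq r = t ^ numq r /\
          z * t ^ (- (2 * sigma p q)) * ((t - t^-1) ^+ 2 - (real_complex R u))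
            * (Bpq p q t (real_complex R u)) ^+ 2 = 1].

Definition parabolic_solution (R : realType) p q (r : rat) : Prop :=
  [/\ odd `|numq r|%N, odd `|denq r|%N &
    exists u : R,
      Apq p q (-1) u = 0 /\
      - (ratr r - (2 * sigma p q)%:~R) * u * Bpq p q (-1) u
        = 2 * Dpq p q (-1) u].

(* Riley's method.  The matrices C = [[t, 1], [0, t^-1]] and D = [[t, 0], [-u, t^-1]]
   satisfy the 2-bridge relation W C = D W exactly when A = (t - t^-1) B: the word is a
   palindrome up to exchanging its two letters, which forces W_21 = -u W_12.  The matrix
   K = (t + t^-1) - C - D exchanges C and D by conjugation, so the unframed longitude
   w*(C, D) W = K W K^-1 W = delta^-1 (K W)^2, delta = (t - t^-1)^2 - u, is upper
   triangular with diagonal (delta B^2, (delta B^2)^-1) and commutes with C.  Hence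
   C^m lambda^n is upper unitriangular and commutes with C; when t <> t^-1 it is trivial
   as soon as its diagonal t^m (t^(-2 sigma) delta B^2)^n is 1, which is the surgery
   equation.  At t = -1 everything is unipotent up to sign and the surgery relation
   becomes the linear condition on u.  For t = e^(i theta) an explicit complex matrix
   conjugates C and D into SL(2, R). *)

From HB Require Import structures.
From mathcomp Require Import all_boot all_order all_algebra.
From mathcomp Require Import all_classical all_reals all_analysis.
From mathcomp Require Import complex zify ring lra.
Set Implicit Arguments. Unset Strict Implicit. Unset Printing Implicit Defensive.
Import Order.TTheory GRing.Theory Num.Theory.
Local Open Scope ring_scope.

Lemma mx2_eta (T : Type) (M : 'M[T]_2) : M = mx2 (M 0 0) (M 0 1) (M 1 0) (M 1 1).
Proof.
apply/matrixP => -[[|[|//]] i] [[|[|//]] j]; rewrite mxE /=;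
  by congr (M _ _); apply: val_inj.
Qed.

Lemma trmx_mx2 (T : Type) (a b c d : T) : (mx2 a b c d)^T = mx2 a c b d.
Proof. by rewrite [LHS]mx2_eta !mxE. Qed.

Lemma map_mx2 (T U : Type) (f : T -> U) (a b c d : T) :
  map_mx f (mx2 a b c d) = mx2 (f a) (f b) (f c) (f d).
Proof. by rewrite [LHS]mx2_eta !mxE. Qed.

Section TwoByTwo.
Variable R : comNzRingType.
Implicit Types a b c d k : R.

Lemma mx2_1 : (1 : 'M[R]_2) = mx2 1 0 0 1.
Proof. by rewrite [LHS]mx2_eta !mxE. Qed.

Lemma mx2M a b c d a' b' c' d' :
  mx2 a b c d * mx2 a' b' c' d' =
  mx2 (a * a' + b * c') (a * b' + b * d') (c * a' + d * c') (c * b' + d * d').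
Proof. by rewrite -mulmxE [LHS]mx2_eta !mxE !big_ord_recl !big_ord0 !mxE /= !addr0. Qed.

Lemma mx2N a b c d : - mx2 a b c d = mx2 (- a) (- b) (- c) (- d).
Proof. by rewrite [LHS]mx2_eta !mxE. Qed.

Lemma mx2Z k a b c d : k *: mx2 a b c d = mx2 (k * a) (k * b) (k * c) (k * d).
Proof. by rewrite [LHS]mx2_eta !mxE. Qed.

Lemma det_mx2 a b c d : \det (mx2 a b c d) = a * d - b * c.
Proof.
by rewrite (expand_det_row _ 0) !big_ord_recl big_ord0 /cofactor !det_mx11 !mxE /=; ring.
Qed.

End TwoByTwo.

Lemma inv_mx2 (F : fieldType) (a b c d : F) : a * d - b * c != 0 ->
  (mx2 a b c d)^-1 = (a * d - b * c)^-1 *: mx2 d (- b) (- c) a.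
Proof.
move=> det0; have uM : mx2 a b c d \is a GRing.unit by rewrite unitmxE det_mx2 unitfE.
apply: (mulrI uM); rewrite mulrV // -scalerAr mx2M mx2Z mx2_1.
by congr mx2; field.
Qed.

Lemma trmx_prod (R : comPzRingType) (n : nat) (I : Type) (r : seq I)
    (F : I -> 'M[R]_n) :
  (\prod_(i <- r) F i)^T = \prod_(i <- rev r) (F i)^T.
Proof.
elim: r => [|i r IH]; first by rewrite !big_nil trmx1.
by rewrite big_cons rev_cons big_rcons -IH -!mulmxE trmx_mul.
Qed.

Lemma rev_index_iota m n :
  rev (index_iota m n) = [seq m + n - i.+1 | i <- index_iota m n]%N.
Proof.
apply: (@eq_from_nth _ 0%N); first by rewrite size_rev size_map.
move=> k; rewrite size_rev size_iota => kn.
by rewrite nth_rev ?size_iota // (nth_map 0%N) ?size_iota // !nth_iota //; lia.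
Qed.

Lemma intertwineV (R : unitRingType) (k x x' : R) :
  x \is a GRing.unit -> x' \is a GRing.unit ->
  k * x = x' * k -> k * x^-1 = x'^-1 * k.
Proof. by move=> ux ux' e; apply: (mulIr ux); rewrite mulrVK // -mulrA e mulKr. Qed.

Lemma exprz_sign (R : unitRingType) (z : int) : (-1 : R) ^ z = (-1) ^+ odd `|z|%N.
Proof.
case: z => k; first by rewrite /exprz /= signr_odd.
by rewrite /exprz /= invr_sign -signr_odd.
Qed.

Lemma esign_sym (p : nat) (q : int) (i : nat) :
  odd `|q|%N -> coprime p `|q| -> (0 < i < p)%N ->
  esign p q (p - i) = esign p q i.
Proof.
move=> oq cop /andP[i0 ip].
have p0 : p%:Z != 0 by rewrite eqz_nat -lt0n (leq_trans i0 (ltnW ip)).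
rewrite /esign; set x := i%:Z * q.
have ndvd : (x %% p)%Z != 0.
  apply/negP => /eqP/dvdz_mod0P; rewrite dvdzE /x abszM /= mulnC Gauss_dvdr //.
  by move=> /(dvdn_leq i0); rewrite leqNgt ip.
have -> : (p - i)%N%:Z * q = q * p + (- x) by rewrite /x -subzn ?(ltnW ip) //; ring.
rewrite divzMDl //.
have ex := divz_eq x p.
set k := (x %/ p)%Z in ex *; set rm := (x %% p)%Z in ex ndvd *.
have r0 : 0 <= rm by apply: modz_ge0.
have r1 : rm < `|p%:Z| by apply: ltz_mod.
have -> : - x = (- k - 1) * p + (p%:Z - rm) by rewrite ex; ring.
by rewrite divzMDl // divz_small ?addr0; lia.
Qed.

Section Words.
Variables (F : comUnitRingType) (p : nat) (q : int).
Implicit Types X Y K : 'M[F]_2.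

Lemma trmx_wordW X Y : (wordW p q X Y)^T = wordWrev p q X^T Y^T.
Proof.
rewrite /wordW trmx_prod rev_index_iota big_map /wordWrev.
apply: eq_bigr => i _; rewrite add1n subSS /mpowb.
by case: esign; rewrite ?trmx_inv; case: odd.
Qed.

Lemma wordW_intertwine K X Y X' Y' :
  X \is a GRing.unit -> Y \is a GRing.unit ->
  X' \is a GRing.unit -> Y' \is a GRing.unit ->
  K * X = X' * K -> K * Y = Y' * K -> K * wordW p q X Y = wordW p q X' Y' * K.
Proof.
move=> uX uY uX' uY' eX eY; rewrite /wordW.
elim: (index_iota 1 p) => [|i r IH]; first by rewrite !big_nil mulr1 mul1r.
rewrite !big_cons mulrA -[RHS]mulrA -IH mulrA; congr (_ * _).
by rewrite /mpowb; case: esign; case: odd => //; apply: intertwineV.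
Qed.

Hypotheses (op : odd p) (oq : odd `|q|%N) (cop : coprime p `|q|).

Lemma wordWrev_swap X Y : wordWrev p q X Y = wordW p q Y X.
Proof.
apply: eq_big_nat => i /andP[i0 ip].
by rewrite esign_sym ?i0 ?ip // oddB ?(ltnW ip) // op; case: odd.
Qed.

Lemma wordW_trmx_intertwine K X Y :
  X \is a GRing.unit -> Y \is a GRing.unit ->
  K * X^T = Y * K -> K * Y^T = X * K -> K * (wordW p q X Y)^T = wordW p q X Y * K.
Proof.
move=> uX uY eX eY.
by rewrite trmx_wordW wordWrev_swap; apply: wordW_intertwine; rewrite ?unitmx_tr.
Qed.

End Words.

Definition surgery_relations (F : comUnitRingType) p q (m n : int)
    (a b : 'M[F]_2) : Prop :=
  wordW p q a b * a = b * wordW p q a b /\ a ^ m * longitude p q a b ^ n = 1.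

Section MatrixMorphism.
Variables (F G : comUnitRingType) (f : 'M[F]_2 -> 'M[G]_2).
Hypotheses (fM : {morph f : X Y / X * Y}) (f1 : f 1 = 1)
  (fV : {morph f : X / X^-1}).

Lemma morph_exprz X (z : int) : f (X ^ z) = f X ^ z.
Proof.
have fX k : f (X ^+ k) = f X ^+ k.
  by elim: k => [|k IH]; rewrite ?f1 // !exprS fM IH.
by case: z => k; rewrite /exprz ?fV fX.
Qed.

Lemma morph_mpowb X e : f (mpowb X e) = mpowb (f X) e.
Proof. by case: e => //=; apply: fV. Qed.

Lemma morph_wordW p q X Y : f (wordW p q X Y) = wordW p q (f X) (f Y).
Proof.
rewrite /wordW (big_morph f fM f1); apply: eq_bigr => i _.
by rewrite morph_mpowb; case: odd.
Qed.

Lemma morph_wordWrev p q X Y : f (wordWrev p q X Y) = wordWrev p q (f X) (f Y).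
Proof.
rewrite /wordWrev (big_morph f fM f1); apply: eq_bigr => i _.
by rewrite morph_mpowb; case: odd.
Qed.

Lemma morph_longitude p q X Y : f (longitude p q X Y) = longitude p q (f X) (f Y).
Proof. by rewrite /longitude !fM morph_wordWrev morph_wordW morph_exprz. Qed.

Lemma surgery_relations_morph p q m n X Y : injective f ->
  surgery_relations p q m n (f X) (f Y) <-> surgery_relations p q m n X Y.
Proof.
move=> f_inj; rewrite /surgery_relations -morph_wordW -morph_longitude.
rewrite -!morph_exprz -!fM -f1.
by split=> [[/f_inj-> /f_inj->] | [-> ->]].
Qed.

End MatrixMorphism.

Section Conjugation.
Variables (R : unitRingType) (Q : R).
Hypothesis uQ : Q \is a GRing.unit.

Lemma conjrM x y : Q^-1 * (x * y) * Q = (Q^-1 * x * Q) * (Q^-1 * y * Q).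
Proof. by rewrite !mulrA mulrK. Qed.

Lemma conjr1 : Q^-1 * 1 * Q = 1.
Proof. by rewrite mulr1 mulVr. Qed.

Lemma conjrV x : Q^-1 * x^-1 * Q = (Q^-1 * x * Q)^-1.
Proof.
have [ux|nux] := boolP (x \is a GRing.unit).
  by rewrite !invrM ?unitrMr ?unitrV // invrK mulrA.
have nu : Q^-1 * x * Q \isn't a GRing.unit by rewrite unitrMl // unitrMr ?unitrV.
by rewrite (invr_out nux) (invr_out nu).
Qed.

Lemma conjr_inj : injective (fun x => Q^-1 * x * Q).
Proof.
move=> x y /(congr1 (fun z => Q * z * Q^-1)).
by rewrite !mulrA !mulrK // !mulrV // !mul1r.
Qed.

End Conjugation.

Section Triangular.
Variable F : fieldType.
Implicit Types (x y : F) (M N : 'M[F]_2).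

Definition borel x M := exists y, M = mx2 x y 0 x^-1.

Lemma borel_entries x M : M 1 0 = 0 -> M 0 0 = x -> M 1 1 = x^-1 -> borel x M.
Proof. by move=> e10 e00 e11; exists (M 0 1); rewrite [LHS]mx2_eta e10 e00 e11. Qed.

Lemma borelM x x' M N : borel x M -> borel x' N -> borel (x * x') (M * N).
Proof.
move=> [y ->] [y' ->]; exists (x * y' + y * x'^-1).
by rewrite mx2M invfM; congr mx2; ring.
Qed.

Lemma borelV x M : x != 0 -> borel x M -> borel x^-1 M^-1.
Proof.
move=> x0 [y ->]; exists (- y); rewrite inv_mx2 ?mx2Z; last first.
  by rewrite mulr0 subr0 mulfV ?oner_neq0.
by rewrite mulr0 subr0 mulfV // invr1 !mul1r oppr0 invrK.
Qed.

Lemma borelXz x M (z : int) : x != 0 -> borel x M -> borel (x ^ z) (M ^ z).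
Proof.
move=> x0 bM.
have bX k : borel (x ^+ k) (M ^+ k).
  elim: k => [|k IH]; last by rewrite !exprS; apply: borelM.
  by exists 0; rewrite !expr0 mx2_1 invr1.
by case: z => k; rewrite /exprz //; apply: borelV; rewrite ?expf_neq0.
Qed.

Definition unipotent x : 'M[F]_2 := mx2 1 x 0 1.

Lemma unipotent0 : unipotent 0 = 1.
Proof. by rewrite /unipotent -mx2_1. Qed.

Lemma unipotentD x y : unipotent (x + y) = unipotent x * unipotent y.
Proof. by rewrite mx2M; congr mx2; ring. Qed.

Lemma unipotentXz x (z : int) : unipotent x ^ z = unipotent (x *~ z).
Proof.
have uX k : unipotent x ^+ k = unipotent (x *+ k).
  by elim: k => [|k IH]; rewrite ?unipotent0 // exprS IH -unipotentD mulrS.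
case: z => k; rewrite /exprz uX // inv_mx2 ?mx2Z; last first.
  by rewrite mulr1 mulr0 subr0 oner_neq0.
by rewrite mulr1 mulr0 subr0 invr1 !mul1r oppr0 NegzE mulrNz.
Qed.

End Triangular.

Lemma Cmx_neq1 (F : fieldType) (t : F) : Cmx t != 1.
Proof.
apply/eqP; rewrite mx2_1 => /(congr1 (fun M : 'M[F]_2 => M 0 1)).
by rewrite !mxE /= => /eqP; rewrite oner_eq0.
Qed.

Lemma subrV_eq0 (F : fieldType) (t : F) :
  t != 0 -> (t - t^-1 == 0) = (t == 1) || (t == -1).
Proof.
move=> t0; have -> : t - t^-1 = t^-1 * ((t - 1) * (t + 1)) by field.
by rewrite !mulf_eq0 invr_eq0 (negbTE t0) subr_eq0 addr_eq0.
Qed.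

Lemma root_mul_eq1 (F : fieldType) (t z L : F) (m n : int) :
  z ^ n = t ^ m -> z * L = 1 -> t ^ m * L ^ n = 1.
Proof. by move=> hz hzL; rewrite -hz -expfzMl hzL exp1rz. Qed.

Section Riley.
Variables (F : fieldType) (t u : F).
Hypothesis t0 : t != 0.

Lemma det_Cmx : \det (Cmx t) = 1.
Proof. by rewrite det_mx2 mulfV // mulr0 subr0. Qed.

Lemma det_Dmx : \det (Dmx t u) = 1.
Proof. by rewrite det_mx2 mulfV // mul0r subr0. Qed.

Lemma Cmx_unit : Cmx t \is a GRing.unit.
Proof. by rewrite unitmxE det_Cmx unitr1. Qed.

Lemma Dmx_unit : Dmx t u \is a GRing.unit.
Proof. by rewrite unitmxE det_Dmx unitr1. Qed.

Lemma borel_Cmx : borel t (Cmx t).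
Proof. by exists 1. Qed.

Lemma borel1_comm_Cmx M : t - t^-1 != 0 ->
  borel 1 M -> GRing.comm (Cmx t) M -> M = 1.
Proof.
move=> s0 [y ->]; rewrite invr1 /GRing.comm !mx2M.
move=> /(congr1 (fun N : 'M[F]_2 => N 0 1)); rewrite !mxE /= => e.
have : y * (t - t^-1) = (t * y + 1 * 1) - (1 * 1 + y * t^-1) by ring.
rewrite e subrr => /eqP.
by rewrite mulf_eq0 (negbTE s0) orbF => /eqP->; rewrite -mx2_1.
Qed.

Variables (p : nat) (q : int).
Hypotheses (op : odd p) (oq : odd `|q|%N) (cop : coprime p `|q|).

Local Notation C := (Cmx t).
Local Notation D := (Dmx t u).
Local Notation W := (Wmx p q t u).
Local Notation B := (Bpq p q t u).
Local Notation delta := ((t - t^-1) ^+ 2 - u).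
Local Notation longitude0 := (wordWrev p q C D * W).

Lemma det_Wmx : \det W = 1.
Proof.
apply: (big_ind (fun M : 'M[F]_2 => \det M = 1)) => [|M N dM dN|i _].
- exact: det1.
- by rewrite -mulmxE det_mulmx dM dN mulr1.
by rewrite /mpowb; case: esign; case: odd; rewrite ?det_inv ?det_Cmx ?det_Dmx ?invr1.
Qed.

(* Delta conjugates C^T to D and D^T to C, hence Delta W^T = W Delta. *)
Lemma Wmx_10 : W 1 0 = - u * B.
Proof.
pose Delta : 'M[F]_2 := mx2 1 0 0 (- u).
have eC : Delta * C^T = D * Delta by rewrite /Cmx /Dmx trmx_mx2 !mx2M; congr mx2; ring.
have eD : Delta * D^T = C * Delta by rewrite /Cmx /Dmx trmx_mx2 !mx2M; congr mx2; ring.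
have := congr1 (fun M : 'M[F]_2 => M 0 1)
  (wordW_trmx_intertwine op oq cop Cmx_unit Dmx_unit eC eD).
rewrite -/W [W]mx2_eta trmx_mx2 !mx2M !mxE /= => e.
by transitivity (1 * W 1 0 + 0 * W 1 1); [ring | rewrite e /Bpq; ring].
Qed.

Hypothesis hA : Apq p q t u = (t - t^-1) * B.

Lemma Wmx_riley : W * C = D * W.
Proof.
move: hA; rewrite /Apq => eA.
by rewrite [W]mx2_eta Wmx_10 eA /Bpq /Cmx /Dmx !mx2M; congr mx2; field.
Qed.

Lemma det_Wmx_riley : B * (u * B + (t - t^-1) * Dpq p q t u) = 1.
Proof.
move: hA; rewrite /Apq => eA; have := det_Wmx.
by rewrite [W]mx2_eta det_mx2 Wmx_10 eA /Bpq /Dpq => <-; ring.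
Qed.

Lemma Bpq_neq0 : B != 0.
Proof.
apply/eqP => B0; move: det_Wmx_riley.
by rewrite B0 mul0r => /eqP; rewrite eq_sym oner_eq0.
Qed.

(* [Kmx] = (t + t^-1) - C - D; by Cayley-Hamilton it swaps C and D under conjugation. *)
Definition Kmx : 'M[F]_2 := mx2 (t^-1 - t) (-1) u (t - t^-1).

Lemma Kmx_C : Kmx * C = D * Kmx.
Proof. by rewrite /Kmx /Cmx /Dmx !mx2M; congr mx2; field. Qed.

Lemma Kmx_D : Kmx * D = C * Kmx.
Proof. by rewrite /Kmx /Cmx /Dmx !mx2M; congr mx2; field. Qed.

Lemma Kmx_Wmx : Kmx * W = mx2 (- delta * B) (- (t - t^-1) * B - Dpq p q t u)
                                0 (u * B + (t - t^-1) * Dpq p q t u).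
Proof.
move: hA; rewrite /Apq => eA.
by rewrite [W]mx2_eta Wmx_10 eA /Bpq /Dpq /Kmx mx2M; congr mx2; ring.
Qed.

Lemma det_Kmx : \det Kmx = - delta.
Proof. by rewrite det_mx2; ring. Qed.

Hypothesis d0 : delta != 0.

Lemma Kmx_unit : Kmx \is a GRing.unit.
Proof. by rewrite unitmxE det_Kmx unitfE oppr_eq0. Qed.

Lemma Kmx_inv : Kmx^-1 = delta^-1 *: Kmx.
Proof.
rewrite inv_mx2 -?det_mx2 -/Kmx det_Kmx ?oppr_eq0 //.
by rewrite /Kmx !mx2Z invrN; congr mx2; ring.
Qed.

Lemma wordW_swap_Kmx : wordW p q D C = Kmx * W * Kmx^-1.
Proof.
rewrite -[wordW p q D C](mulrK Kmx_unit); congr (_ * _).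
by apply/esym/wordW_intertwine; rewrite ?Cmx_unit ?Dmx_unit ?Kmx_C ?Kmx_D.
Qed.

Lemma longitude0_Kmx : longitude0 = delta^-1 *: (Kmx * W) ^+ 2.
Proof.
rewrite wordWrev_swap // wordW_swap_Kmx Kmx_inv.
by rewrite -scalerAr -scalerAl (expr2 (Kmx * W)) !mulrA.
Qed.

Lemma borel_longitude0 : borel (delta * B ^+ 2) longitude0.
Proof.
have E : u * B + (t - t^-1) * Dpq p q t u = B^-1.
  by apply: (mulfI Bpq_neq0); rewrite det_Wmx_riley mulfV ?Bpq_neq0.
rewrite longitude0_Kmx Kmx_Wmx E [X in _ *: X]expr2 mx2M mx2Z.
apply: borel_entries; rewrite !mxE /=;
  move: d0 Bpq_neq0; move: (delta) B => d b d_neq0 b_neq0;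
  by field; rewrite ?d_neq0 ?b_neq0 ?t0.
Qed.

Lemma Cmx_comm_longitude0 : GRing.comm C longitude0.
Proof.
have eCK : C * Kmx^-1 = Kmx^-1 * D.
  by apply: (mulrI Kmx_unit); rewrite [LHS]mulrA Kmx_C mulrK ?Kmx_unit // mulVKr ?Kmx_unit.
rewrite wordWrev_swap // wordW_swap_Kmx /GRing.comm.
rewrite !mulrA -Kmx_D -[Kmx * D * W]mulrA -Wmx_riley mulrA.
rewrite -[Kmx * W * C * Kmx^-1]mulrA eCK.
by rewrite !mulrA -[_ * D * W]mulrA -Wmx_riley !mulrA.
Qed.

Lemma surgery_relations_Cmx_Dmx (m n : int) : t - t^-1 != 0 ->
  t ^ m * (t ^ (- (2 * sigma p q)) * delta * B ^+ 2) ^ n = 1 ->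
  surgery_relations p q m n C D.
Proof.
move=> s0 hL; split; first exact: Wmx_riley.
have L0 : delta * B ^+ 2 * t ^ (- (2 * sigma p q)) != 0.
  by rewrite !mulf_neq0 ?expfz_neq0 ?expf_neq0 ?Bpq_neq0.
have bL : borel (delta * B ^+ 2 * t ^ (- (2 * sigma p q))) (longitude p q C D).
  exact: borelM borel_longitude0 (borelXz _ t0 borel_Cmx).
have := borelM (borelXz m t0 borel_Cmx) (borelXz n L0 bL).
rewrite [_ * B ^+ 2 * _]mulrC mulrA hL => /(borel1_comm_Cmx s0); apply.
apply: commrM; first exact/commrXz/commr_refl.
apply/commrXz/commrM; first exact: Cmx_comm_longitude0.
exact/commrXz/commr_refl.
Qed.

End Riley.

Section Parabolic.
Variables (F : fieldType) (p : nat) (q : int) (u : F).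
Hypotheses (op : odd p) (oq : odd `|q|%N) (cop : coprime p `|q|).
Hypothesis hA : Apq p q (-1) u = 0.

Local Notation B := (Bpq p q (-1) u).
Local Notation D := (Dpq p q (-1) u).

Let t0 : (-1 : F) != 0. Proof. by rewrite oppr_eq0 oner_neq0. Qed.

Let s0 : (-1 : F) - (-1)^-1 = 0. Proof. by rewrite invrN1 subrr. Qed.

Lemma riley_parabolic : Apq p q (-1) u = ((-1) - (-1)^-1) * B.
Proof. by rewrite s0 mul0r. Qed.

Lemma det_Wmx_parabolic : u * B ^+ 2 = 1.
Proof. by rewrite -[RHS](det_Wmx_riley t0 op oq cop riley_parabolic) s0; ring. Qed.

Lemma longitude0_parabolic :
  wordWrev p q (Cmx (-1)) (Dmx (-1) u) * Wmx p q (-1) u = - unipotent (- (2 * B * D)).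
Proof.
have uB := det_Wmx_parabolic.
have u0 : u != 0.
  by apply/eqP => u0; move: uB; rewrite u0 mul0r => /eqP; rewrite eq_sym oner_eq0.
have d0 : ((-1 : F) - (-1)^-1) ^+ 2 - u != 0 by rewrite s0 expr0n /= add0r oppr_eq0.
rewrite longitude0_Kmx // ?riley_parabolic // Kmx_Wmx ?riley_parabolic // s0.
rewrite [X in _ *: X]expr2 mx2M mx2Z mx2N expr0n /= sub0r.
rewrite !(mul0r, mulr0, oppr0, addr0, add0r, subr0, opprK) /unipotent.
move: B D uB => b d ub.
by congr mx2; [rewrite -ub | | rewrite -ub]; field; rewrite oppr_eq0.
Qed.

Lemma Cmx_parabolic : Cmx (-1 : F) = - unipotent (-1).
Proof. by rewrite /Cmx invrN1 /unipotent mx2N opprK oppr0. Qed.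

Lemma longitude_parabolic : longitude p q (Cmx (-1)) (Dmx (-1) u) =
  - unipotent ((2 * sigma p q)%:~R - 2 * B * D).
Proof.
rewrite /longitude longitude0_parabolic Cmx_parabolic expNrz exprz_sign unipotentXz.
have -> : odd `|- (2 * sigma p q)|%N = false by lia.
rewrite expr0 mul1r mulNr -unipotentD; congr (- unipotent _).
by rewrite mulrNz mulNrz opprK addrC.
Qed.

Lemma surgery_relations_parabolic (m n : int) :
  odd `|m|%N -> odd `|n|%N -> n%:~R != 0 :> F ->
  - (m%:~R / n%:~R - (2 * sigma p q)%:~R) * u * B = 2 * D ->
  surgery_relations p q m n (Cmx (-1)) (Dmx (-1) u).
Proof.
move=> om on n0 hmn; split; first exact: Wmx_riley riley_parabolic.
have e : 2 * B * D = (2 * sigma p q)%:~R - m%:~R / n%:~R.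
  transitivity (((2 * sigma p q)%:~R - m%:~R / n%:~R) * (u * B ^+ 2)); last first.
    by rewrite det_Wmx_parabolic mulr1.
  move: (m%:~R / n%:~R) ((2 * sigma p q)%:~R) hmn => k s hmn.
  by transitivity (B * (2 * D)); [ring | rewrite -hmn; ring].
rewrite longitude_parabolic Cmx_parabolic !(expNrz (unipotent _)) !exprz_sign om on.
rewrite !unipotentXz !mulN1r mulrNN -unipotentD -(mulrzr _ m) -(mulrzr _ n) e.
rewrite -unipotent0; congr unipotent.
by move: (m%:~R) (n%:~R) ((2 * sigma p q)%:~R) n0 => k l s l_neq0; field.
Qed.

End Parabolic.

Lemma complex_ext (T : Type) (x y : complex T) :
  complex.Re x = complex.Re y -> complex.Im x = complex.Im y -> x = y.
Proof. by case: x y => [a b] [c d] /= -> ->. Qed.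

Lemma sqrt_ratio_witness (R : realType) (u a : R) : 0 < a ->
  (u < - a) || (0 < u) -> exists2 mu : R, 0 < mu & mu ^+ 2 * (u + a) = u.
Proof.
move=> a0 hu.
have [ua0 k0] : u + a != 0 /\ 0 < u / (u + a).
  case/orP: hu => hu; last first.
    have ua : 0 < u + a by lra.
    by rewrite gt_eqF // divr_gt0.
  have ua : u + a < 0 by lra.
  by rewrite lt_eqF // -mulrNN -invrN divr_gt0 // oppr_gt0; lra.
by exists (Num.sqrt (u / (u + a))); rewrite ?sqrtr_gt0 // sqr_sqrtr ?ltW // divfK.
Qed.

(* Q conjugates C and D, at t = e^(i theta), into the real matrices [rot_mx] and
   [Dreal_mx]; the parameter mu, with mu^2 = u / (u + 4 sin^2 theta), is real exactly for
   u in the admissible range. *)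
Section UnitCircle.
Variables (R : realType) (c s u mu : R).
Hypotheses (cs1 : c ^+ 2 + s ^+ 2 = 1) (s0 : s != 0) (mu0 : 0 < mu)
  (hmu : mu ^+ 2 * (u + 4 * s ^+ 2) = u).

Local Notation t := (Complex c s).

Lemma unit_circle_neq0 : t != 0.
Proof.
apply/eqP => -[c0 s0']; move: cs1; rewrite c0 s0' expr0n /= addr0 => /eqP.
by rewrite eq_sym oner_eq0.
Qed.

Lemma unit_circle_inv : t^-1 = Complex c (- s).
Proof.
apply: (mulfI unit_circle_neq0); rewrite mulfV ?unit_circle_neq0 //.
by apply: complex_ext => /=; rewrite -?cs1; ring.
Qed.

Lemma one_sub_mu_neq0 : 1 - mu != 0.
Proof.
have s2 : 0 < s ^+ 2 by rewrite exprn_even_gt0.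
by rewrite subr_eq0; apply/eqP => mu1; move: hmu; rewrite -mu1; lra.
Qed.

Lemma one_add_mu_neq0 : 1 + mu != 0.
Proof. by rewrite gt_eqF // addr_gt0. Qed.

Lemma one_sub_mu2_neq0 : 1 - mu ^+ 2 != 0.
Proof.
have -> : 1 - mu ^+ 2 = (1 - mu) * (1 + mu) by ring.
by rewrite mulf_neq0 ?one_sub_mu_neq0 ?one_add_mu_neq0.
Qed.

Lemma u_of_mu : u = 4 * s ^+ 2 * mu ^+ 2 / (1 - mu ^+ 2).
Proof.
apply: (mulIf one_sub_mu2_neq0); rewrite divfK ?one_sub_mu2_neq0 //.
by transitivity (u - mu ^+ 2 * u); [ring | rewrite -{1}hmu; ring].
Qed.

Definition Qmx : 'M[R[i]]_2 :=
  mx2 (Complex (1 + mu) 0) (Complex 0 (1 - mu))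
      (Complex 0 (- (2 * s * mu))) (Complex (- (2 * s * mu)) 0).

Definition rot_mx : 'M[R]_2 := mx2 c (- s) s c.

Definition Dreal_mx : 'M[R]_2 :=
  mx2 c (- (s * (1 - mu) / (1 + mu))) (s * (1 + mu) / (1 - mu)) c.

Lemma Qmx_unit : Qmx \is a GRing.unit.
Proof.
have dQ : \det Qmx = real_complex R (- (4 * s * mu)).
  by rewrite det_mx2; apply: complex_ext => /=; ring.
rewrite unitmxE dQ unitfE; apply/eqP => -[/eqP].
by rewrite oppr_eq0 !mulf_eq0 pnatr_eq0 (negbTE s0) (gt_eqF mu0).
Qed.

Lemma Cmx_Qmx : Cmx t * Qmx = Qmx * map_mx (real_complex R) rot_mx.
Proof.
rewrite /Cmx unit_circle_inv /Qmx /rot_mx map_mx2 !mx2M.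
by congr mx2; apply: complex_ext => /=; ring.
Qed.

Lemma Dmx_Qmx : Dmx t (real_complex R u) * Qmx = Qmx * map_mx (real_complex R) Dreal_mx.
Proof.
rewrite /Dmx unit_circle_inv /Qmx /Dreal_mx map_mx2 !mx2M.
by congr mx2; apply: complex_ext => /=; rewrite ?u_of_mu; field;
  rewrite ?one_sub_mu_neq0 ?one_add_mu_neq0 ?one_sub_mu2_neq0.
Qed.

Lemma det_rot_mx : \det rot_mx = 1.
Proof. by rewrite det_mx2 -cs1; ring. Qed.

Lemma det_Dreal_mx : \det Dreal_mx = 1.
Proof.
by rewrite det_mx2 -[RHS]cs1; field; rewrite ?one_sub_mu_neq0 ?one_add_mu_neq0.
Qed.

Lemma rot_mx_neq1 : rot_mx != 1.
Proof.
apply/eqP; rewrite mx2_1 => /(congr1 (fun M : 'M[R]_2 => M 0 1)).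
by rewrite !mxE /= => /eqP; rewrite oppr_eq0 (negbTE s0).
Qed.

Lemma surgery_relations_unit_circle p q m n :
  surgery_relations p q m n (Cmx t) (Dmx t (real_complex R u)) ->
  surgery_relations p q m n rot_mx Dreal_mx.
Proof.
have uQ := Qmx_unit.
have eC : map_mx (real_complex R) rot_mx = Qmx^-1 * Cmx t * Qmx.
  by rewrite -mulrA Cmx_Qmx mulKr.
have eD : map_mx (real_complex R) Dreal_mx = Qmx^-1 * Dmx t (real_complex R u) * Qmx.
  by rewrite -mulrA Dmx_Qmx mulKr.
move=> rel.
apply/(surgery_relations_morph (f := map_mx (real_complex R)) (fun X Y => map_mxM _ X Y)
        (map_mx1 _ _) (fun X => map_invmx _ X) _ _ _ _ _ _ map_mx_inj).
rewrite eC eD.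
by apply/(surgery_relations_morph (conjrM uQ) (conjr1 uQ) (conjrV uQ)
          _ _ _ _ _ _ (conjr_inj uQ)).
Qed.

End UnitCircle.

Lemma nontrivial_rep_of_relations (R : realType) p q (r : rat) (a b : 'M[R]_2) :
  \det a = 1 -> \det b = 1 -> a != 1 ->
  surgery_relations p q (numq r) (denq r) a b -> nontrivial_SL2_rep_surgery R p q r.
Proof. by move=> da db a1 [e1 e2]; exists a, b; split=> // -[/eqP]; rewrite (negbTE a1). Qed.

Section Solutions.
Variables (R : realType) (p : nat) (q : int) (r : rat).
Hypotheses (op : odd p) (oq : odd `|q|%N) (cop : coprime p `|q|).

Lemma real_solution_rep : real_solution R p q r -> nontrivial_SL2_rep_surgery R p q r.
Proof.
move=> [t [u [tN1 t0 t1 hA [z [hz hL]]]]].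
have s0 : t - t^-1 != 0 by rewrite subrV_eq0 // negb_or t1.
have d0 : (t - t^-1) ^+ 2 - u != 0.
  by apply: contra_eq_neq hL => ->; rewrite mulr0 mul0r eq_sym oner_neq0.
apply: nontrivial_rep_of_relations (det_Cmx t0) (det_Dmx u t0) (Cmx_neq1 t) _.
apply: surgery_relations_Cmx_Dmx => //.
by apply: (root_mul_eq1 hz); rewrite !(mulrA z).
Qed.

Lemma unit_circle_solution_rep :
  unit_circle_solution R p q r -> nontrivial_SL2_rep_surgery R p q r.
Proof.
move=> [theta [u [_ [-> tN1 hu hA [z [hz hL]]]]]].
move: tN1 hu hA hz hL; set c := cos theta; set s := sin theta => tN1 hu hA hz hL.
have cs1 : c ^+ 2 + s ^+ 2 = 1 := cos2Dsin2 theta.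
have t0 := unit_circle_neq0 cs1.
have s0' : Complex c s - (Complex c s)^-1 != 0 by rewrite subrV_eq0 // negb_or.
have s0 : s != 0.
  apply: contraNneq s0' => s0; rewrite unit_circle_inv // s0.
  by apply/eqP/complex_ext => /=; ring.
have s2 : 0 < 4 * s ^+ 2 by rewrite mulr_gt0 // exprn_even_gt0.
have ua : u + 4 * s ^+ 2 != 0.
  by case/orP: hu => hu; [rewrite lt_eqF | rewrite gt_eqF] => //; lra.
have d0 : (Complex c s - (Complex c s)^-1) ^+ 2 - real_complex R u != 0.
  apply: contraNneq ua; rewrite unit_circle_inv // => /(congr1 (@complex.Re R)) /=.
  by move=> h; apply/eqP; lra.
have [mu mu0 hmu] := sqrt_ratio_witness s2 hu.
apply: nontrivial_rep_of_relations (det_rot_mx cs1) (det_Dreal_mx cs1 s0 mu0 hmu)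
  (rot_mx_neq1 c s0) _.
apply: (surgery_relations_unit_circle cs1 s0 mu0 hmu).
apply: surgery_relations_Cmx_Dmx => //.
by apply: (root_mul_eq1 hz); rewrite !(mulrA z).
Qed.

Lemma parabolic_solution_rep :
  parabolic_solution R p q r -> nontrivial_SL2_rep_surgery R p q r.
Proof.
move=> [om on [u [hA hmn]]].
have t0 : (-1 : R) != 0 by rewrite oppr_eq0 oner_neq0.
apply: nontrivial_rep_of_relations (det_Cmx t0) (det_Dmx u t0) (Cmx_neq1 (-1)) _.
by apply: surgery_relations_parabolic => //; rewrite intr_eq0 denq_neq0.
Qed.

End Solutions.

Theorem mainTheorem7 (R : realType) (p : nat) (q : int) (r : rat) :
  odd p -> odd `|q|%N -> - (p%:Z) < q < p%:Z -> coprime p `|q| ->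
  real_solution R p q r \/ unit_circle_solution R p q r \/
  parabolic_solution R p q r ->
  nontrivial_SL2_rep_surgery R p q r.
Proof.
move=> op oq _ cop [|[]].
- exact: real_solution_rep.
- exact: unit_circle_solution_rep.
- exact: parabolic_solution_rep.
Qed.
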